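(* Let $n\ge 3$ be odd and $k\ge 3$. Then every Jenga-like configuration $Q$ of the $(n,k)$-game satisfies $$ g(Q)\le \frac{n(n-1)(k-2)}{2}. $$
   Context: The $(n,k)$-game is played with $nk$ blocks, each a box of length $n$, width $1$, height $1$. Level $i$ occupies heights $[i-1,i]$ and has $n$ slots $j=1,\dots,n$; a block in slot $j$ of an odd level $i$ is $[0,n]\times[j-1,j]\times[i-1,i]$, and of an even level $i$ is $[j-1,j]\times[0,n]\times[i-1,i]$. The initial configuration has $k$ full levels. A move removes exactly one block from a level which is not the topmost level and, when the topmost level is incomplete (fewer than $n$ blocks), is not the level immediately below the topmost level, and places it in an empty slot of the topmost level if that level is incomplete, or in a slot of a new level on top otherwise. A Jenga-like configuration is one obtainable from the initial configuration by finitely many moves in which every level up to the topmost contains at least one block. $g(Q)$ is the genus of the boundary surface of the union of the blocks of $Q$ (a connected closed polyhedral surface). *)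

From mathcomp Require Import all_boot all_order all_algebra.
Set Implicit Arguments. Unset Strict Implicit. Unset Printing Implicit Defensive.
Import Order.TTheory GRing.Theory Num.Theory.

(* A configuration of the (n,k)-game: the list of levels, bottom first
   (list index l = level l+1); a level is the set of its occupied slots,
   slot s : 'I_n being slot j = s+1 of the paper. *)
Definition config (n : nat) := seq {set 'I_n}.

Definition initial (n k : nat) : config n := nseq k [set: 'I_n].

Definition top_level n (c : config n) : {set 'I_n} := last set0 c.

Definition move n (c c' : config n) : Prop :=
  exists (i : nat) (j : 'I_n),
    [/\ i.+1 < size c,
        #|top_level c| < n -> i.+2 < size c,
        j \in nth set0 c i &
        let c1 := set_nth set0 c i (nth set0 c i :\ j) in
        if #|top_level c| < n then
          exists s : 'I_n, s \notin top_level c /\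
            c' = set_nth set0 c1 (size c).-1 (s |: top_level c)
        else exists s : 'I_n, c' = rcons c1 [set s]].

Inductive reachable n (k : nat) : config n -> Prop :=
| reach_init : reachable k (initial n k)
| reach_step c c' : reachable k c -> move c c' -> reachable k c'.

Definition jenga_like n (k : nat) (Q : config n) : Prop :=
  reachable k Q /\ all (fun L => L != set0) Q.

Local Open Scope ring_scope.

(* The unit cube [x,x+1]x[y,y+1]x[z,z+1] is contained in the union of blocks.
   Level with 0-based index z (paper level z+1): if z+1 is odd, a block in slot
   s is [0,n]x[s,s+1]x[z,z+1]; if even, [s,s+1]x[0,n]x[z,z+1]. *)
Definition occ n (Q : config n) (x y z : int) : bool :=
  [&& 0 <= z, z < (size Q)%:Z, 0 <= x, x < n%:Z, 0 <= y, y < n%:Z &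
   let L := nth set0 Q `|z|%N in
   if ~~ odd `|z|%N then [exists s in L, (nat_of_ord s)%:Z == y]
   else [exists s in L, (nat_of_ord s)%:Z == x]].

(* Boundary cell complex of the union of cubes: the boundary surface is the
   union of the unit squares separating an occupied from an empty cube. *)
Definition allsame (s : seq bool) : bool := all id s || all negb s.

Definition bvert n (Q : config n) (x y z : int) : bool :=
  ~~ allsame [seq occ Q (x - a.1.1%:Z) (y - a.1.2%:Z) (z - a.2%:Z)
             | a <- [:: (0,0,0); (0,0,1); (0,1,0); (0,1,1);
                        (1,0,0); (1,0,1); (1,1,0); (1,1,1)]%N].

(* edges from (x,y,z) to (x,y,z)+e_axis, axis = 0,1,2 *)
Definition bedge n (Q : config n) (axis : nat) (x y z : int) : bool :=
  ~~ allsame [seq (match axis with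
                    | 0%N => occ Q x (y - a.1%:Z) (z - a.2%:Z)
                    | 1%N => occ Q (x - a.1%:Z) y (z - a.2%:Z)
                    | _ => occ Q (x - a.1%:Z) (y - a.2%:Z) z end)
             | a <- [:: (0,0); (0,1); (1,0); (1,1)]%N].

(* unit squares perpendicular to axis, with minimal corner (x,y,z) *)
Definition bface n (Q : config n) (axis : nat) (x y z : int) : bool :=
  match axis with
  | 0%N => occ Q (x - 1) y z != occ Q x y z
  | 1%N => occ Q x (y - 1) z != occ Q x y z
  | _ => occ Q x y (z - 1) != occ Q x y z
  end.

(* all relevant grid coordinates lie in [0, B) with B = n + size Q + 1 *)
Definition gridcount n (Q : config n) (P : int -> int -> int -> bool) : nat :=
  let B := (n + size Q).+1 in
  (\sum_(x < B) \sum_(y < B) \sum_(z < B) P x%:Z y%:Z z%:Z)%N.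

Definition nV n (Q : config n) : nat := gridcount Q (bvert Q).
Definition nE n (Q : config n) : nat :=
  (gridcount Q (bedge Q 0) + gridcount Q (bedge Q 1) + gridcount Q (bedge Q 2))%N.
Definition nF n (Q : config n) : nat :=
  (gridcount Q (bface Q 0) + gridcount Q (bface Q 1) + gridcount Q (bface Q 2))%N.

(* Euler characteristic of the boundary surface, and its genus
   (for a connected closed orientable surface, chi = 2 - 2g). *)
Definition euler_char n (Q : config n) : int := (nV Q)%:Z - (nE Q)%:Z + (nF Q)%:Z.

Definition genus n (Q : config n) : int := ((2 - euler_char Q) %/ 2)%Z.

From mathcomp Require Import all_boot all_order all_algebra.
From mathcomp Require Import zify ring.
Import Order.TTheory GRing.Theory Num.Theory.
Set Implicit Arguments. Unset Strict Implicit. Unset Printing Implicit Defensive.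

(* Along any play the level below the top stays full, and at most n(k-2)
   blocks lie below the three topmost levels.  The Euler characteristic of the
   boundary is a sum of contributions of grid points, each determined by the 8
   cubes around the point.  Every level is a product (a set of slots times a
   full side), so the contributions of the slab between two consecutive levels
   add up to r + r' - 2 r r', where r and r' count the maximal runs of
   consecutive occupied slots: the levels are unions of r and r' disjoint boxes
   that meet in r r' squares.  Hence g = 1 + sum_z (r_z r_(z+1) - r_z).  When
   the level below the top is full, the three topmost levels contribute -1, and
   r_z <= |L_z|, r_(z+1) <= ceil(n/2) bound every other term by |L_z| (n-1)/2. *)

Section Blocks.

Variable n : nat.
Implicit Types (c : config n) (X : {set 'I_n}).

Definition blocks_below c m : nat := \sum_(z < m) #|nth set0 c z|.

Lemma blocks_belowS c m :
  blocks_below c m.+1 = blocks_below c m + #|nth set0 c m|.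
Proof. by rewrite /blocks_below big_ord_recr. Qed.

Lemma blocks_below_set_nth c i X m :
  blocks_below (set_nth set0 c i X) m + (i < m) * #|nth set0 c i|
  = blocks_below c m + (i < m) * #|X|.
Proof.
elim: m => [|m IHm]; first by rewrite /blocks_below !big_ord0.
rewrite !blocks_belowS nth_set_nth /= ltnS; move: IHm.
by case: (ltngtP m i) => [lt_mi|lt_im|->]; rewrite /= ?mul0n ?mul1n; lia.
Qed.

Lemma blocks_below_rcons c X m :
  m <= size c -> blocks_below (rcons c X) m = blocks_below c m.
Proof.
move=> le_m; apply: eq_bigr => z _.
by rewrite nth_rcons (leq_trans (ltn_ord z) le_m).
Qed.

Lemma blocks_below_nseq k X m :
  m <= k -> blocks_below (nseq k X) m = m * #|X|.
Proof.
move=> le_mk; rewrite /blocks_below (eq_bigr (fun => #|X|)).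
  by rewrite sum_nat_const card_ord.
by move=> z _; rewrite nth_nseq (leq_trans (ltn_ord z) le_mk).
Qed.

End Blocks.

Definition jenga_inv n k (c : config n) : Prop :=
  [/\ 3 <= size c, blocks_below c (size c) = n * k,
      nth set0 c (size c - 2) = setT
    & blocks_below c (size c - 3) <= n * (k - 2)].

Lemma jenga_inv_initial n k : 3 <= k -> jenga_inv k (initial n k).
Proof.
move=> k_ge3; rewrite /jenga_inv /initial size_nseq !blocks_below_nseq ?leq_subr //.
rewrite nth_nseq cardsT card_ord mulnC; split => //; last by nia.
by rewrite ifT //; lia.
Qed.

Lemma top_levelE n (c : config n) : top_level c = nth set0 c (size c).-1.
Proof. by rewrite /top_level nth_last. Qed.

Lemma full_set n (A : {set 'I_n}) : ~~ (#|A| < n) -> A = setT.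
Proof.
by move=> not_lt; apply/eqP; rewrite eqEcard subsetT cardsT card_ord leqNgt.
Qed.

Section Move.

Variables (n k : nat) (c : config n) (i : nat) (j : 'I_n).
Hypotheses (lt_i : i.+1 < size c) (j_in : j \in nth set0 c i).

Let c1 := set_nth set0 c i (nth set0 c i :\ j).

Lemma size_remove : size c1 = size c.
Proof. by rewrite size_set_nth; apply/maxn_idPr; lia. Qed.

Lemma nth_remove z : z != i -> nth set0 c1 z = nth set0 c z.
Proof. by move=> /negbTE ne_zi; rewrite nth_set_nth /= ne_zi. Qed.

Lemma blocks_below_remove m : blocks_below c1 m + (i < m) = blocks_below c m.
Proof.
rewrite /c1; have := blocks_below_set_nth c i (nth set0 c i :\ j) m.
rewrite (cardsD1 j) j_in; set rest := #|_ :\ j|.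
by case: (i < m); rewrite /= ?mul0n ?mul1n; lia.
Qed.

Lemma jenga_inv_fill_top (s : 'I_n) :
  jenga_inv k c -> i.+2 < size c -> s \notin top_level c ->
  jenga_inv k (set_nth set0 c1 (size c).-1 (s |: top_level c)).
Proof.
move=> [size_c total full lower] lt_i2 s_out.
have top_c1 : nth set0 c1 (size c).-1 = top_level c.
  by rewrite nth_remove ?top_levelE //; apply/eqP; lia.
have sum_top m := blocks_below_set_nth c1 (size c).-1 (s |: top_level c) m.
rewrite top_c1 cardsU1 s_out in sum_top.
have sum_rm := blocks_below_remove.
have size_new : size (set_nth set0 c1 (size c).-1 (s |: top_level c)) = size c.
  by rewrite size_set_nth size_remove; apply/maxn_idPr; lia.
rewrite /jenga_inv size_new; split => //.
- have := sum_top (size c); have := sum_rm (size c).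
  have lt_top : (size c).-1 < size c by lia.
  by rewrite lt_top (ltnW lt_i) /=; lia.
- by rewrite nth_set_nth /= ifN ?nth_remove //; apply/eqP; lia.
- have := sum_top (size c - 3); have := sum_rm (size c - 3).
  rewrite (_ : (size c).-1 < size c - 3 = false) /=; last by lia.
  by case: (i < size c - 3) => /=; lia.
Qed.

Lemma jenga_inv_new_level (s : 'I_n) :
  jenga_inv k c -> ~~ (#|top_level c| < n) -> jenga_inv k (rcons c1 [set s]).
Proof.
move=> [size_c total full lower] top_full.
have top : nth set0 c (size c).-1 = setT by rewrite -top_levelE; apply: full_set.
have sum_rm := blocks_below_remove.
rewrite /jenga_inv size_rcons size_remove; split; first by lia.
- rewrite blocks_belowS blocks_below_rcons ?size_remove // nth_rcons size_remove.
  rewrite ltnn eqxx cards1; have := sum_rm (size c).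
  by rewrite (ltnW lt_i) /=; lia.
- rewrite nth_rcons size_remove ifT; last by lia.
  have -> : (size c).+1 - 2 = (size c).-1 by lia.
  by rewrite nth_remove //; apply/eqP; lia.
- have -> : (size c).+1 - 3 = size c - 2 by lia.
  rewrite blocks_below_rcons ?size_remove ?leq_subr //.
  have split_top : blocks_below c (size c)
      = blocks_below c (size c - 2) + #|nth set0 c (size c - 2)| + #|nth set0 c (size c).-1|.
    have {1}-> : size c = (size c - 2).+2 by lia.
    by rewrite !blocks_belowS (_ : (size c - 2).+1 = (size c).-1) //; lia.
  rewrite total full top cardsT card_ord in split_top.
  by have := sum_rm (size c - 2); rewrite mulnBr; lia.
Qed.

End Move.

Lemma jenga_inv_move n k (c c' : config n) : jenga_inv k c -> move c c' -> jenga_inv k c'.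
Proof.
move=> inv [i [j [lt_i fill_lt j_in]]] /=.
case: ifP => top_lt.
  by move=> [s [s_out ->]]; apply: jenga_inv_fill_top => //; exact: fill_lt top_lt.
by move=> [s ->]; apply: jenga_inv_new_level => //; rewrite top_lt.
Qed.

Lemma jenga_inv_reachable n k (c : config n) : 3 <= k -> reachable k c -> jenga_inv k c.
Proof.
move=> k_ge3; elim => [|c0 c1 _ IH mv]; first exact: jenga_inv_initial.
exact: jenga_inv_move IH mv.
Qed.

Local Open Scope ring_scope.

Definition cell_euler n (Q : config n) (x y z : int) : int :=
  (bvert Q x y z)%:Z - (bedge Q 0 x y z + bedge Q 1 x y z + bedge Q 2 x y z)%N%:Z
  + (bface Q 0 x y z + bface Q 1 x y z + bface Q 2 x y z)%N%:Z.

Lemma Posz_sum I (r : seq I) (P : pred I) (F : I -> nat) :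
  (\sum_(i <- r | P i) F i)%N%:Z = \sum_(i <- r | P i) (F i)%:Z.
Proof. exact: (big_morph Posz PoszD (erefl _)). Qed.

Lemma euler_char_cells n (Q : config n) (B := (n + size Q).+1) :
  euler_char Q = \sum_(x < B) \sum_(y < B) \sum_(z < B) cell_euler Q x y z.
Proof.
rewrite /euler_char /nV /nE /nF /gridcount -/B /cell_euler.
rewrite !PoszD.
do 3!(rewrite !Posz_sum -!big_split -sumrB -big_split /=; apply: eq_bigr => ? _).
by rewrite !PoszD.
Qed.

Section Slots.

Variable n : nat.
Implicit Types (A : {set 'I_n}) (x : int).

Definition slotz A x : bool := [exists s in A, (nat_of_ord s)%:Z == x].

Lemma slotz0 x : slotz set0 x = false.
Proof. by apply/existsP => -[s]; rewrite inE. Qed.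

Lemma slotz_range A x : slotz A x -> (0 <= x) && (x < n%:Z).
Proof. by case/existsP => s /andP[_ /eqP <-]; rewrite ltz_nat ltn_ord. Qed.

Lemma slotzT x : slotz setT x = (0 <= x) && (x < n%:Z).
Proof.
apply/idP/idP; first exact: slotz_range.
by case: x => // m /andP[_ lt_mn]; apply/existsP; exists (Ordinal lt_mn); rewrite inE /=.
Qed.

Lemma slotz_subT A x : slotz A x -> slotz setT x.
Proof. by rewrite slotzT; apply: slotz_range. Qed.

End Slots.

Definition level n (Q : config n) (z : int) : {set 'I_n} :=
  if z < 0 then set0 else nth set0 Q `|z|%N.
Definition xslots n (Q : config n) (z : int) : {set 'I_n} :=
  if odd `|z|%N then level Q z else setT.
Definition yslots n (Q : config n) (z : int) : {set 'I_n} :=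
  if odd `|z|%N then setT else level Q z.

Lemma occ_slots n (Q : config n) x y z :
  occ Q x y z = slotz (xslots Q z) x && slotz (yslots Q z) y.
Proof.
rewrite /occ /xslots /yslots /level.
case: z => [m|m] /=; last by case: (odd m); rewrite /= slotz0 ?andbF.
rewrite ltz_nat; case: (ltnP m (size Q)) => lt_mQ /=; last first.
  by rewrite nth_default //; case: (odd m); rewrite /= slotz0 ?andbF.
case: (odd m) => /=; rewrite slotzT -/(slotz _ _).
- case hx: (slotz _ x); last by rewrite !andbF.
  by case/andP: (slotz_range hx) => -> ->; rewrite /= andbT.
- case hy: (slotz _ y); last by rewrite !andbF.
  by case/andP: (slotz_range hy) => -> ->; rewrite !andbT.
Qed.

(* Argument [buvw] is the occupancy of the unit cube with minimal corner
   (x-u, y-v, z-w) around the grid point (x, y, z). *)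
Definition local_euler (b000 b001 b010 b011 b100 b101 b110 b111 : bool) : int :=
  (~~ allsame [:: b000; b001; b010; b011; b100; b101; b110; b111])%:Z
  - (~~ allsame [:: b000; b001; b010; b011] + ~~ allsame [:: b000; b001; b100; b101]
     + ~~ allsame [:: b000; b010; b100; b110])%N%:Z
  + ((b100 != b000) + (b010 != b000) + (b001 != b000))%N%:Z.

Lemma cell_euler_local n (Q : config n) x y z :
  cell_euler Q x y z =
  local_euler (occ Q x y z) (occ Q x y (z - 1)) (occ Q x (y - 1) z) (occ Q x (y - 1) (z - 1))
    (occ Q (x - 1) y z) (occ Q (x - 1) y (z - 1)) (occ Q (x - 1) (y - 1) z)
    (occ Q (x - 1) (y - 1) (z - 1)).
Proof. by rewrite /cell_euler /bvert /bedge /bface /= !subr0. Qed.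

Definition bits4 := (bool * bool * bool * bool)%type.

Definition window n (A B : {set 'I_n}) (x : int) : bits4 :=
  (slotz A (x - 1), slotz A x, slotz B (x - 1), slotz B x).

(* [local_euler] when the cubes below height z occupy [lx] times [ly] and those
   above it [ux] times [uy], primes marking the coordinate shifted by -1. *)
Definition slab_euler (sx sy : bits4) : int :=
  let: (lx', lx, ux', ux) := sx in let: (ly', ly, uy', uy) := sy in
  local_euler (ux && uy) (lx && ly) (ux && uy') (lx && ly')
    (ux' && uy) (lx' && ly) (ux' && uy') (lx' && ly').

Lemma cell_euler_window n (Q : config n) x y z :
  cell_euler Q x y z =
  slab_euler (window (xslots Q (z - 1)) (xslots Q z) x)
             (window (yslots Q (z - 1)) (yslots Q z) y).
Proof. by rewrite cell_euler_local !occ_slots. Qed.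

Lemma slab_eulerC sx sy : slab_euler sx sy = slab_euler sy sx.
Proof. by case: sx sy => [[[[] []] []] []] [[[[] []] []] []]. Qed.

Lemma big_ord_predr (N : nat) (g : nat -> int) :
  (0 < N)%N -> \sum_(i < N) g i = \sum_(i < N.-1) g i + g N.-1.
Proof. by case: N => // N _; rewrite big_ord_recr. Qed.

Definition transitions (f : nat -> bool) (N : nat) (p q : bool) : nat :=
  \sum_(m < N) ((f m == p) && (f m.+1 == q)).

Lemma sum_transitions (f : nat -> bool) N (K : bool -> bool -> int) :
  \sum_(m < N) K (f m) (f m.+1) =
    K false false * (transitions f N false false)%:Z
  + K false true * (transitions f N false true)%:Z
  + K true false * (transitions f N true false)%:Z
  + K true true * (transitions f N true true)%:Z.
Proof.
rewrite /transitions !Posz_sum !big_distrr -!big_split /=; apply: eq_bigr => m _.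
by case: (f m); case: (f m.+1); rewrite /= ?mulr0 ?mulr1 ?addr0 ?add0r.
Qed.

Lemma transitions_ends (f : nat -> bool) N :
  (f N + transitions f N true false = f 0 + transitions f N false true)%N.
Proof.
elim: N => [|N IHN]; first by rewrite /transitions !big_ord0.
by move: IHN; rewrite /transitions !big_ord_recr /=; case: (f N); case: (f N.+1) => /=; lia.
Qed.

Lemma transitions_switch (f : nat -> bool) N :
  (transitions f N true false + transitions f N false true <= N)%N.
Proof.
rewrite /transitions -big_split /= -[X in (_ <= X)%N]card_ord -sum1_card.
by apply: leq_sum => i _; case: (f i); case: (f i.+1).
Qed.

Section Runs.

Variable n : nat.
Hypothesis n_gt0 : (0 < n)%N.
Implicit Types (A B T : {set 'I_n}) (F : bits4 -> int).

Definition slotn A (m : nat) : bool := slotz A m%:Z.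

Lemma slotn_out A m : (n <= m)%N -> slotn A m = false.
Proof.
by move=> le_nm; apply/negbTE/negP => /slotz_range /andP[_]; rewrite ltz_nat ltnNge le_nm.
Qed.

Lemma slotnT m : slotn setT m = (m < n)%N.
Proof. by rewrite /slotn slotzT ltz_nat. Qed.

Lemma slotn0 m : slotn set0 m = false.
Proof. exact: slotz0. Qed.

Lemma slotn_ord A (i : 'I_n) : slotn A i = (i \in A).
Proof.
apply/existsP/idP => [[s /andP[sA]]|iA]; last by exists i; rewrite iA eqxx.
by rewrite eqz_nat => /eqP/val_inj <-.
Qed.

Lemma window0 A B : window A B 0 = (false, slotn A 0, false, slotn B 0).
Proof.
have out C : slotz C (0 - 1) = false by apply/negbTE/negP => /slotz_range.
by rewrite /window !out.
Qed.

Lemma windowS A B m :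
  window A B m.+1%:Z = (slotn A m, slotn A m.+1, slotn B m, slotn B m.+1).
Proof. by rewrite /window /slotn -addn1 PoszD addrK. Qed.

Lemma sum_window F A B N : (n < N)%N -> F (false, false, false, false) = 0 ->
  \sum_(x < N) F (window A B x) =
  F (false, slotn A 0, false, slotn B 0)
  + \sum_(m < n.-1) F (slotn A m, slotn A m.+1, slotn B m, slotn B m.+1)
  + F (slotn A n.-1, false, slotn B n.-1, false).
Proof.
move=> lt_nN F0; rewrite -(subnKC lt_nN) big_split_ord /=.
rewrite [X in _ + X]big1 ?addr0 => [|i _]; last first.
  by rewrite addSn windowS !slotn_out //; lia.
rewrite big_ord_recl window0 -addrA; congr (_ + _).
rewrite (eq_bigr (fun i : 'I_n => F (window A B i.+1%:Z))) //.
rewrite (big_ord_predr (fun i => F (window A B i.+1%:Z))) //.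
rewrite /= windowS prednK // !(slotn_out _ (leqnn n)).
by congr (_ + _); apply: eq_bigr => i _; rewrite windowS.
Qed.

(* Each maximal run of consecutive slots starts at slot 0 or after an empty slot. *)
Definition runs A : nat := slotn A 0 + transitions (slotn A) n.-1 false true.

Lemma runs_end A : runs A = (slotn A n.-1 + transitions (slotn A) n.-1 true false)%N.
Proof. by rewrite transitions_ends. Qed.

Lemma runs0 : runs set0 = 0%N.
Proof. by rewrite /runs slotn0 /transitions big1 // => m _; rewrite !slotn0. Qed.

Lemma runsT : runs setT = 1%N.
Proof.
rewrite /runs slotnT n_gt0 /transitions big1 // => m _.
by rewrite !slotnT (ltn_trans (ltn_ord m)) ?ltn_predL.
Qed.

Lemma card_slotn A : #|A| = (\sum_(0 <= m < n) slotn A m)%N.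
Proof.
rewrite big_mkord -sum1_card big_mkcond /=; apply: eq_bigr => i _.
by rewrite slotn_ord; case: (i \in A).
Qed.

Lemma runs_le_card A : (runs A <= #|A|)%N.
Proof.
rewrite card_slotn (big_ltn n_gt0) big_add1 big_mkord /runs leq_add2l.
by apply: leq_sum => m _; case: (slotn A m); case: (slotn A m.+1).
Qed.

Lemma runs_le_uphalf A : (runs A <= uphalf n)%N.
Proof.
have := transitions_switch (slotn A) n.-1; have := runs_end A; rewrite /runs.
by case: (slotn A 0); case: (slotn A n.-1) => /=; lia.
Qed.

Lemma sum_window_fullr F A N : (n < N)%N -> F (false, false, false, false) = 0 ->
  \sum_(y < N) F (window A setT y) =
  F (false, slotn A 0, false, true)
  + \sum_(m < n.-1) F (slotn A m, slotn A m.+1, true, true)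
  + F (slotn A n.-1, false, true, false).
Proof.
move=> lt_nN F0; rewrite sum_window // !slotnT n_gt0 ltn_predL n_gt0.
congr (_ + _ + _); apply: eq_bigr => m _.
have lt_m1 : (m.+1 < n)%N by rewrite -ltn_predRL.
by rewrite !slotnT lt_m1 (ltnW lt_m1).
Qed.

Lemma sum_window_fulll F A N : (n < N)%N -> F (false, false, false, false) = 0 ->
  \sum_(x < N) F (window setT A x) =
  F (false, true, false, slotn A 0)
  + \sum_(m < n.-1) F (true, true, slotn A m, slotn A m.+1)
  + F (true, false, slotn A n.-1, false).
Proof.
pose swap (s : bits4) : bits4 := let: (a, b, c, d) := s in (c, d, a, b).
move=> lt_nN F0; rewrite (eq_bigr (fun x : 'I_N => F (swap (window A setT x)))) //.
by rewrite (@sum_window_fullr (F \o swap)).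
Qed.

Definition row_weight (r : int) (sx : bits4) : int :=
  match sx with
  | (_, true, false, true) => 1 - r
  | (true, true, true, false) => - r
  | (true, false, false, false) => r
  | _ => 0
  end.

Lemma slab_euler0r sx : slab_euler sx (false, false, false, false) = 0.
Proof. by case: sx => [[[[] []] []] []]. Qed.

Lemma slab_row A T N x : (n < N)%N ->
  \sum_(y < N) slab_euler (window setT T x) (window A setT y)
  = row_weight (runs A)%:Z (window setT T x).
Proof.
move=> lt_nN; rewrite sum_window_fullr ?slab_euler0r //.
rewrite (sum_transitions _ _ (fun p q => slab_euler _ (p, q, true, true))) /runs.
have := transitions_ends (slotn A) n.-1.
have /implyP := @slotz_subT _ T (x - 1); have /implyP := @slotz_subT _ T x.
rewrite /window.
case: (slotz T x) (slotz T (x - 1)) (slotz setT x) (slotz setT (x - 1)) => [] [] [] [] //= _ _.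
all: case: (slotn A 0); case: (slotn A n.-1) => /= ends;
  rewrite /slab_euler /local_euler /=; lia.
Qed.

Lemma slab_sum_cross A T N : (n < N)%N ->
  \sum_(x < N) \sum_(y < N) slab_euler (window setT T x) (window A setT y)
  = (runs A)%:Z + (runs T)%:Z - 2 * (runs A)%:Z * (runs T)%:Z.
Proof.
move=> lt_nN; under eq_bigr do rewrite slab_row //.
rewrite sum_window_fulll // (sum_transitions _ _ (fun p q => row_weight _ (true, true, p, q))).
have := transitions_ends (slotn T) n.-1; rewrite [runs T]/runs.
by case: (slotn T 0); case: (slotn T n.-1) => /= ends; nia.
Qed.

End Runs.

Lemma odd_absz_pred (z : nat) : odd `|z%:Z - 1|%N = ~~ odd z.
Proof. by case: z => // z; rewrite -addn1 PoszD addrK /= addn1 /= negbK. Qed.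

Lemma slab_sum n (Q : config n) (z : nat) N : (0 < n)%N -> (n < N)%N ->
  \sum_(x < N) \sum_(y < N) cell_euler Q x y z
  = (runs (level Q (z%:Z - 1)))%:Z + (runs (level Q z))%:Z
    - 2 * (runs (level Q (z%:Z - 1)))%:Z * (runs (level Q z))%:Z.
Proof.
move=> n_gt0 lt_nN; under eq_bigr do under eq_bigr do rewrite cell_euler_window.
rewrite /xslots /yslots odd_absz_pred absz_nat; case: (odd z).
  exact: slab_sum_cross.
under eq_bigr do under eq_bigr do rewrite slab_eulerC.
by rewrite exchange_big; apply: slab_sum_cross.
Qed.

Lemma telescope_pairs (R : nat -> int) N :
  R 0%N + \sum_(z < N) (R z + R z.+1 - 2 * R z * R z.+1)
  = R N + 2 * \sum_(z < N) (R z - R z * R z.+1).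
Proof.
elim: N => [|N IHN]; first by rewrite !big_ord0 mulr0 addr0.
by rewrite !big_ord_recr /= addrA IHN; ring.
Qed.

Definition level_runs n (Q : config n) (z : nat) : int := (runs (nth set0 Q z))%:Z.

Lemma euler_char_slabs n (Q : config n) : (0 < n)%N ->
  euler_char Q = level_runs Q 0 + \sum_(z < n + size Q)
    (level_runs Q z + level_runs Q z.+1 - 2 * level_runs Q z * level_runs Q z.+1).
Proof.
move=> n_gt0; pose R z := (runs (level Q z))%:Z.
have R_pred (z : nat) : R (z.+1%:Z - 1) = level_runs Q z.
  by rewrite /R -addn1 PoszD addrK.
rewrite euler_char_cells; under eq_bigr do rewrite exchange_big /=.
rewrite exchange_big /= (eq_bigr (fun z : 'I__ => R (z%:Z - 1) + R z - 2 * R (z%:Z - 1) * R z)).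
  2: by move=> z _; apply: slab_sum; rewrite // ltnS leq_addr.
rewrite big_ord_recl /=; under eq_bigr do rewrite /bump leq0n add1n !R_pred.
by rewrite [R (_ - 1)]/R /level /= runs0 add0r mulr0 subr0.
Qed.

Lemma euler_char_runs n (Q : config n) : (0 < n)%N ->
  euler_char Q =
  2 * \sum_(z < size Q) (level_runs Q z - level_runs Q z * level_runs Q z.+1).
Proof.
have vanish z : (size Q <= z)%N -> level_runs Q z = 0 by move=> ?; rewrite /level_runs nth_default ?runs0.
move=> n_gt0; rewrite euler_char_slabs // telescope_pairs vanish ?leq_addl // add0r.
rewrite addnC big_split_ord /= [X in _ + X]big1 ?addr0 // => i _.
by rewrite !vanish ?mul0r ?subr0 //; lia.
Qed.

Lemma genus_runs n (Q : config n) : (0 < n)%N ->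
  genus Q = 1 - \sum_(z < size Q) (level_runs Q z - level_runs Q z * level_runs Q z.+1).
Proof.
move=> n_gt0; rewrite /genus euler_char_runs //.
by rewrite -[X in X - _](mulr1 2) -mulrBr mulKz.
Qed.

Lemma genus_top_full n (Q : config n) : (0 < n)%N -> (3 <= size Q)%N ->
  nth set0 Q (size Q - 2) = setT ->
  genus Q =
  \sum_(z < size Q - 3) (level_runs Q z * level_runs Q z.+1 - level_runs Q z).
Proof.
move=> n_gt0 size_ge3 full; rewrite genus_runs //; set p := (size Q - 3)%N.
have size_Q : size Q = p.+3 by rewrite /p; lia.
have full_runs : level_runs Q p.+1 = 1.
  by rewrite /level_runs (_ : p.+1 = size Q - 2)%N ?full ?runsT //; lia.
have top_runs : level_runs Q p.+3 = 0 by rewrite /level_runs nth_default ?runs0 ?size_Q.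
have -> : \sum_(z < p) (level_runs Q z * level_runs Q z.+1 - level_runs Q z)
        = - \sum_(z < p) (level_runs Q z - level_runs Q z * level_runs Q z.+1).
  by rewrite -sumrN; apply: eq_bigr => z _; rewrite opprB.
by rewrite size_Q !big_ord_recr /= full_runs top_runs; ring.
Qed.

Lemma runs_mul_le n (A B : {set 'I_n}) : (0 < n)%N ->
  (runs A)%:Z * (runs B)%:Z - (runs A)%:Z <= (#|A| * n.-1./2)%N%:Z.
Proof.
move=> n_gt0; have := runs_le_card n_gt0 A; have := runs_le_uphalf n_gt0 B.
have : uphalf n = (n.-1./2).+1 by rewrite -[in LHS](prednK n_gt0).
nia.
Qed.

Lemma genus_le_blocks n (Q : config n) : (0 < n)%N -> (3 <= size Q)%N ->
  nth set0 Q (size Q - 2) = setT ->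
  genus Q <= (blocks_below Q (size Q - 3) * n.-1./2)%N%:Z.
Proof.
move=> n_gt0 size_ge3 full; rewrite genus_top_full // /blocks_below big_distrl Posz_sum.
by apply: ler_sum => z _; apply: runs_mul_le.
Qed.

Theorem mainTheorem6 (n k : nat) (Q : config n) :
  odd n -> (3 <= n)%N -> (3 <= k)%N -> jenga_like k Q ->
  genus Q <= ((n * (n - 1) * (k - 2)) %/ 2)%N%:Z.
Proof.
(* The argument does not need [n] to be odd. *)
move=> _ n_ge3 k_ge3 [reach _].
have [size_ge3 _ full lower] := jenga_inv_reachable k_ge3 reach.
apply: le_trans (genus_le_blocks _ size_ge3 full) _; first by lia.
rewrite lez_nat leq_divRL //.
nia.
Qed.
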